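(* Let $G$ be a digraph with a fixed upward planar drawing, let $s,t\in V(G)$ and let $P$ be a directed path from $s$ to $t$ in $G$. If $P'$ is a directed $s$-$t$ path with $P'\cap\mathrm{Right}(P)\neq\emptyset$, then there is a directed $s$-$t$ path $Q$ such that $Q\subseteq P\cup\mathrm{Right}(P)$ and $Q\cap\mathrm{Right}(P)\neq\emptyset$.
   Context: An upward planar drawing of a digraph is a plane drawing (no edge crossings) in which every directed edge is a curve monotone increasing in the $y$-direction from tail to head. A path is identified with the set of points of $\mathbb{R}^2$ in its drawing. For a path $P$ with endpoints $(x,y)$, $(x',y')$, $y\le y'$, let $\mathrm{Right}(P):=\{(u,v)\in\mathbb{R}^2: y\le v\le y',\ u'<u \text{ for all } u' \text{ with } (u',v)\in P\}$. *)

From Stdlib Require Import Reals List.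
Import ListNotations.
Set Implicit Arguments.
Open Scope R_scope.

Record digraph := {
  vert : Type;
  edge : Type;
  tail : edge -> vert;
  head : edge -> vert;
  vert_fin : exists l : list vert, forall v, In v l;
  edge_fin : exists l : list edge, forall e, In e l }.

Arguments tail {d} e.
Arguments head {d} e.

Definition point := (R * R)%type.

Definition cont01 (f : R -> point) : Prop :=
  forall t, 0 <= t <= 1 -> forall eps, 0 < eps -> exists delta, 0 < delta /\
    forall t', 0 <= t' <= 1 -> Rabs (t' - t) < delta ->
      Rabs (fst (f t') - fst (f t)) < eps /\ Rabs (snd (f t') - snd (f t)) < eps.

Record upward_planar_drawing (G : digraph) := {
  vpos : vert G -> point;
  ecurve : edge G -> R -> point;
  vpos_inj : forall v w, vpos v = vpos w -> v = w;
  ecurve_cont : forall e, cont01 (ecurve e);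
  ecurve_tail : forall e, ecurve e 0 = vpos (tail e);
  ecurve_head : forall e, ecurve e 1 = vpos (head e);
  ecurve_upward : forall e a b, 0 <= a -> a < b -> b <= 1 ->
    snd (ecurve e a) < snd (ecurve e b);
  ecurve_avoid_vertices : forall e t v, 0 < t < 1 -> ecurve e t <> vpos v;
  ecurve_noncrossing : forall e e' a b, e <> e' -> 0 <= a <= 1 -> 0 <= b <= 1 ->
    ecurve e a = ecurve e' b -> exists v, ecurve e a = vpos v }.

Fixpoint is_walk (G : digraph) (s : vert G) (es : list (edge G)) (t : vert G) : Prop :=
  match es with
  | [] => s = t
  | e :: es' => tail e = s /\ @is_walk G (head e) es' t
  end.

Definition walk_verts (G : digraph) (s : vert G) (es : list (edge G)) : list (vert G) :=
  s :: map (@head G) es.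

Definition dipath (G : digraph) (s t : vert G) (es : list (edge G)) : Prop :=
  @is_walk G s es t /\ NoDup (@walk_verts G s es).

Definition path_points (G : digraph) (D : upward_planar_drawing G)
  (s : vert G) (es : list (edge G)) (p : point) : Prop :=
  p = vpos D s \/
  exists e, In e es /\ exists a, 0 <= a <= 1 /\ p = ecurve D e a.

Definition RightOf (G : digraph) (D : upward_planar_drawing G)
  (s t : vert G) (es : list (edge G)) (p : point) : Prop :=
  Rmin (snd (vpos D s)) (snd (vpos D t)) <= snd p <=
    Rmax (snd (vpos D s)) (snd (vpos D t)) /\
  forall u', path_points D s es (u', snd p) -> u' < fst p.

Arguments is_walk {G} s es t.
Arguments walk_verts {G} s es.
Arguments dipath {G} s t es.

From Stdlib Require Import Reals List Lra Lia Ranalysis5 ClassicalEpsilon Classical.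
Import ListNotations.
Open Scope R_scope.

(* Let [e0] be an edge of [P'] through a point of Right(P), and let [S] be the
   maximal subwalk of [P'] through [e0] whose inner vertices avoid [P]: it leaves
   [P] at a vertex [u] and rejoins it at a higher vertex [w], so following [P] to
   [u], then [S], then [P] from [w] is a path [Q].  The geometric content is that
   [S] stays within [P] and Right(P).  An edge off [P] with a point in Right(P)
   cannot leave Right(P) without meeting [P]: an edge [f] of [P] lying to its
   right at some height lies to its left lower down, and an upward curve passing
   from the left of another upward curve to its right meets it (by the
   intermediate value theorem, after reparametrising by height), contradicting
   planarity.  The inner vertices of [S] are not on [P], hence strictly right of
   it, so this passes from each edge of [S] to the next. *)

Definition upward (f : R -> point) : Prop :=
  forall a b, 0 <= a -> a < b -> b <= 1 -> snd (f a) < snd (f b).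

Lemma upward_le f a b : upward f -> 0 <= a -> a <= b -> b <= 1 ->
  snd (f a) <= snd (f b).
Proof. intros Hf ? ? ?. destruct (Req_dec a b) as [->|]; [lra|left; apply Hf; lra]. Qed.

Lemma upward_le_inv f a b : upward f -> 0 <= a <= 1 -> 0 <= b <= 1 ->
  snd (f a) <= snd (f b) -> a <= b.
Proof.
  intros Hf ? ? ?. destruct (Rle_dec a b) as [|Hba]; auto.
  assert (snd (f b) < snd (f a)) by (apply Hf; lra). lra.
Qed.

Lemma upward_inj f a b : upward f -> 0 <= a <= 1 -> 0 <= b <= 1 ->
  snd (f a) = snd (f b) -> a = b.
Proof. intros. apply Rle_antisym; apply (upward_le_inv f); auto; lra. Qed.

(** * Continuous curves as total functions *)

Definition clamp (t : R) : R :=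
  if Rle_dec t 0 then 0 else if Rle_dec t 1 then t else 1.

Lemma clamp_in t : 0 <= clamp t <= 1.
Proof. unfold clamp; destruct (Rle_dec t 0); [lra|destruct (Rle_dec t 1); lra]. Qed.

Lemma clamp_id t : 0 <= t <= 1 -> clamp t = t.
Proof. intros; unfold clamp; destruct (Rle_dec t 0); [lra|destruct (Rle_dec t 1); lra]. Qed.

Lemma clamp_lipschitz x y : Rabs (clamp x - clamp y) <= Rabs (x - y).
Proof.
  unfold clamp; destruct (Rle_dec x 0); destruct (Rle_dec y 0);
  try destruct (Rle_dec x 1); try destruct (Rle_dec y 1);
  unfold Rabs; repeat destruct Rcase_abs; lra.
Qed.

Lemma continuity_pt_clamp : forall x, continuity_pt clamp x.
Proof.
  intros x eps Heps; exists eps; split; auto; intros x' [_ Hx'].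
  simpl in *; unfold Rdist in *. pose proof (clamp_lipschitz x' x); lra.
Qed.

Lemma cont01_clamp f x : cont01 f ->
  continuity_pt (fun t => fst (f (clamp t))) x /\
  continuity_pt (fun t => snd (f (clamp t))) x.
Proof.
  intros Hf.
  split; intros eps Heps;
    destruct (Hf (clamp x) (clamp_in x) eps Heps) as [delta [Hdelta Hclose]];
    exists delta; split; auto; intros x' [_ Hx']; simpl in *; unfold Rdist in *;
    (destruct (Hclose (clamp x') (clamp_in x')) as [H1 H2];
     [pose proof (clamp_lipschitz x' x); lra | assumption]).
Qed.

Lemma upward_height_ivt f a b y : cont01 f -> 0 <= a -> a <= b -> b <= 1 ->
  snd (f a) <= y <= snd (f b) -> exists c, a <= c <= b /\ snd (f c) = y.
Proof.
  intros Hf Ha Hab Hb Hy.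
  destruct (Req_dec a b) as [<-|Hneq]; [exists a; split; lra|].
  destruct (f_interv_is_interv (fun t => snd (f (clamp t))) a b y) as [c [Hc Ec]].
  - lra.
  - rewrite !clamp_id by lra. exact Hy.
  - intros; apply cont01_clamp, Hf.
  - exists c. rewrite clamp_id in Ec by lra. auto.
Qed.

Section HeightInverse.
Variable f : R -> point.
Hypothesis f_cont : cont01 f.
Hypothesis f_up : upward f.

(* A strictly increasing continuous bijection of R extending the height of [f]. *)
Let height t := snd (f (clamp t)) + (t - clamp t).

Let height_incr a b : a < b -> height a < height b.
Proof.
  intros Hab. unfold height.
  pose proof (clamp_in a); pose proof (clamp_in b).
  assert (Hc : clamp a = clamp b \/ clamp a < clamp b) by
    (unfold clamp; destruct (Rle_dec a 0); destruct (Rle_dec b 0);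
     try destruct (Rle_dec a 1); try destruct (Rle_dec b 1); lra).
  assert (a - clamp a <= b - clamp b) by
    (unfold clamp; destruct (Rle_dec a 0); destruct (Rle_dec b 0);
     try destruct (Rle_dec a 1); try destruct (Rle_dec b 1); lra).
  destruct Hc as [->|Hc]; [lra|].
  assert (snd (f (clamp a)) < snd (f (clamp b))) by (apply f_up; lra). lra.
Qed.

Let height_le_inv a b : height a <= height b -> a <= b.
Proof. intros. destruct (Rle_dec a b); auto. pose proof (height_incr b a); lra. Qed.

Let height_id t : 0 <= t <= 1 -> height t = snd (f t).
Proof. intros. unfold height. rewrite clamp_id; auto. lra. Qed.

Let height_cont x : continuity_pt height x.
Proof.
  apply (continuity_pt_plus (fun t => snd (f (clamp t))) (fun t => t - clamp t));
    [apply cont01_clamp, f_cont|].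
  apply (continuity_pt_minus (fun t => t) clamp); [|apply continuity_pt_clamp].
  apply derivable_continuous_pt, derivable_pt_id.
Qed.

Lemma upward_height_inverse : exists phi : R -> R,
  forall y, snd (f 0) <= y <= snd (f 1) ->
    0 <= phi y <= 1 /\ snd (f (phi y)) = y /\ continuity_pt phi y.
Proof.
  assert (Hlo : height (-1) = snd (f 0) - 1) by
    (unfold height, clamp; destruct (Rle_dec (-1) 0); lra).
  assert (Hhi : height 2 = snd (f 1) + 1) by
    (unfold height, clamp; destruct (Rle_dec 2 0); [lra|]; destruct (Rle_dec 2 1); lra).
  set (phi y := epsilon (inhabits 0) (fun t => height t = y)).
  assert (Hphi : forall y, height (-1) <= y <= height 2 -> height (phi y) = y).
  { intros y Hy. apply (epsilon_spec (inhabits 0) (fun t => height t = y)).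
    destruct (f_interv_is_interv height (-1) 2 y ltac:(lra) Hy (fun x _ => height_cont x))
      as [t [_ Ht]].
    eauto. }
  exists phi. intros y Hy.
  assert (Hrange : 0 <= phi y <= 1).
  { pose proof (Hphi y ltac:(lra)) as E.
    split; apply height_le_inv; rewrite E, height_id; lra. }
  split; [exact Hrange|split].
  - rewrite <- height_id by exact Hrange. apply Hphi. lra.
  - apply (continuity_pt_recip_interv height phi (-1) 2); try lra.
    + intros a b _ Hab _. apply height_incr; auto.
    + intros x H1 H2. unfold comp, id. apply Hphi. lra.
    + intros x H1 H2. pose proof (Hphi x (conj H1 H2)).
      split; apply height_le_inv; lra.
    + intros; apply height_cont.
Qed.

End HeightInverse.

(* Reparametrising [f] by height turns this into the intermediate value theorem
   for the horizontal distance between the two curves. *)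
Lemma upward_curves_meet f g c1 c2 d1 d2 :
  cont01 f -> upward f -> cont01 g -> upward g ->
  0 <= c1 -> c1 < c2 -> c2 <= 1 -> 0 <= d1 <= 1 -> 0 <= d2 <= 1 ->
  snd (f d1) = snd (g c1) -> snd (f d2) = snd (g c2) ->
  fst (f d1) < fst (g c1) -> fst (g c2) < fst (f d2) ->
  exists c d, c1 <= c <= c2 /\ 0 <= d <= 1 /\ g c = f d.
Proof.
  intros fc fu gc gu Hc1 Hc12 Hc2 Hd1 Hd2 E1 E2 L1 L2.
  destruct (upward_height_inverse f fc fu) as [phi Hphi].
  assert (Hband : forall c, c1 <= c <= c2 -> snd (f 0) <= snd (g c) <= snd (f 1)).
  { intros c Hc. pose proof (upward_le g c1 c gu) as H1. pose proof (upward_le g c c2 gu) as H2.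
    pose proof (upward_le f 0 d1 fu) as H3. pose proof (upward_le f d2 1 fu) as H4.
    lra. }
  assert (Hphi_at : forall c d, c1 <= c <= c2 -> 0 <= d <= 1 -> snd (f d) = snd (g c) ->
    phi (snd (g c)) = d).
  { intros c d Hc Hd E. destruct (Hphi _ (Hband c Hc)) as [Hr [Ey _]].
    apply (upward_inj f); auto. congruence. }
  set (h c := fst (f (clamp (phi (snd (g (clamp c)))))) - fst (g (clamp c))).
  assert (Hh : forall c, c1 <= c <= c2 -> h c = fst (f (phi (snd (g c)))) - fst (g c)).
  { intros c Hc. unfold h. destruct (Hphi _ (Hband c Hc)) as [Hr _].
    rewrite (clamp_id c), (clamp_id (phi _)) by lra. reflexivity. }
  assert (Hcont : forall c, c1 <= c <= c2 -> continuity_pt h c).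
  { intros c Hc. apply continuity_pt_minus; [|apply cont01_clamp, gc].
    apply (continuity_pt_comp (fun c => phi (snd (g (clamp c)))) (fun t => fst (f (clamp t))));
      [|apply cont01_clamp, fc].
    apply (continuity_pt_comp (fun c => snd (g (clamp c))) phi); [apply cont01_clamp, gc|].
    rewrite clamp_id by lra. apply Hphi, Hband, Hc. }
  destruct (IVT_interv h c1 c2 Hcont Hc12) as [c [Hc Hz]].
  - rewrite Hh, (Hphi_at c1 d1) by (auto; lra). lra.
  - rewrite Hh, (Hphi_at c2 d2) by (auto; lra). lra.
  - exists c, (phi (snd (g c))).
    destruct (Hphi _ (Hband c Hc)) as [Hr [Ey _]].
    rewrite Hh in Hz by exact Hc.
    split; [exact Hc|split; [exact Hr|]].
    revert Ey Hz. generalize (f (phi (snd (g c)))) as q. intros [fx fy].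
    destruct (g c) as [gx gy]. simpl. intros. f_equal; lra.
Qed.

(** * Families of upward curves *)

(* Shaped so that [path_points D s P] is convertible to
   [family_points (ecurve D) P (vpos D s)], and [right_of (ecurve D) P (vpos D s)]
   to the second component of [RightOf D s t P]. *)
Definition family_points {E : Type} (curve : E -> R -> point) (es : list E) (b q : point) :=
  q = b \/ exists e, In e es /\ exists a, 0 <= a <= 1 /\ q = curve e a.

Definition right_of {E : Type} (curve : E -> R -> point) (es : list E) (b q : point) :=
  forall u, family_points curve es b (u, snd q) -> u < fst q.

Definition chained_up {E : Type} (curve : E -> R -> point) (es : list E) (b : point) :=
  forall e, In e es -> curve e 0 = b \/ exists e', In e' es /\ curve e' 1 = curve e 0.

Definition chained_down {E : Type} (curve : E -> R -> point) (es : list E) (b : point) :=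
  forall e, In e es -> curve e 1 = b \/ exists e', In e' es /\ curve e' 0 = curve e 1.

Lemma right_of_not_point {E} (curve : E -> R -> point) es b q :
  right_of curve es b q -> ~ family_points curve es b q.
Proof.
  intros Hr Hq. specialize (Hr (fst q)). rewrite <- surjective_pairing in Hr.
  specialize (Hr Hq). lra.
Qed.

Lemma filter_length_le {A} (p q : A -> bool) (l : list A) :
  (forall x, p x = true -> q x = true) -> (length (filter p l) <= length (filter q l))%nat.
Proof.
  intros H. induction l as [|a l IH]; simpl; auto.
  destruct (p a) eqn:Ep; [rewrite (H a Ep)|destruct (q a)]; simpl; lia.
Qed.

Lemma filter_length_lt {A} (p q : A -> bool) (l : list A) x :
  (forall y, p y = true -> q y = true) -> In x l -> p x = false -> q x = true ->
  (length (filter p l) < length (filter q l))%nat.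
Proof.
  intros H Hx Hp Hq. induction l as [|a l IH]; simpl; [destruct Hx|].
  destruct Hx as [<-|Hx].
  - rewrite Hp, Hq. simpl. pose proof (filter_length_le p q l H). lia.
  - specialize (IH Hx). destruct (p a) eqn:Ep; [rewrite (H a Ep)|destruct (q a)]; simpl; lia.
Qed.

Section UpwardFamily.
Variables (E : Type) (curve : E -> R -> point) (es : list E).
Hypothesis curve_cont : forall e, In e es -> cont01 (curve e).
Hypothesis curve_up : forall e, In e es -> upward (curve e).

Local Notation points := (family_points curve es).
Local Notation right := (right_of curve es).

Lemma family_point_above_base b q : chained_up curve es b -> points b q -> snd b < snd q ->
  exists e d, In e es /\ 0 < d <= 1 /\ q = curve e d.
Proof.
  intros Hchain [->|[e [He [a [Ha ->]]]]] Hbq; [lra|].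
  destruct (Req_dec a 0) as [->|Na]; [|exists e, a; repeat split; auto; lra].
  destruct (Hchain e He) as [Eb|[e' [He' E']]]; [rewrite Eb in Hbq; lra|].
  exists e', 1. rewrite E'. repeat split; auto; lra.
Qed.

Let starts_below (H : R) : nat :=
  length (filter (fun e => if Rlt_dec (snd (curve e 0)) H then true else false) es).

Let starts_below_lt e H H' : In e es -> H <= snd (curve e 0) < H' ->
  (starts_below H < starts_below H')%nat.
Proof.
  intros He HH. apply (filter_length_lt _ _ _ e); auto.
  - intros x. destruct (Rlt_dec _ H); destruct (Rlt_dec _ H'); auto; lra.
  - destruct (Rlt_dec _ H); auto; lra.
  - destruct (Rlt_dec _ H'); auto; lra.
Qed.

(* If a curve [f] of the family were to the right of [g c2] at its height, then
   [f] was to the left of [g] lower down: at the height of [g c1] if [f] starts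
   below it, and otherwise at the start of [f], where [g] is to the right of the
   family by induction on the number of curves starting below.  So [f] would
   cross [g]. *)
Lemma right_of_upward_preserved b g c1 c2 :
  chained_up curve es b -> cont01 g -> upward g ->
  0 <= c1 -> c1 <= c2 <= 1 -> snd b <= snd (g c1) -> right b (g c1) ->
  (forall c, c1 <= c <= c2 -> ~ points b (g c)) -> right b (g c2).
Proof.
  intros Hchain gc gu Hc1 Hc2 Hb Hr.
  remember (S (starts_below (snd (g c2)))) as n eqn:En.
  assert (Hn : (starts_below (snd (g c2)) < n)%nat) by lia. clear En.
  revert c2 Hc2 Hn. induction n as [|n IH]; intros c2 Hc2 Hn Havoid; [lia|].
  intros u Hu.
  destruct (Rtotal_order u (fst (g c2))) as [Hlt|[Heq|Hgt]]; [exact Hlt| |exfalso].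
  { exfalso. apply (Havoid c2); [lra|]. rewrite Heq in Hu.
    rewrite (surjective_pairing (g c2)). exact Hu. }
  destruct (Req_dec c1 c2) as [<-|Nc]; [specialize (Hr u Hu); lra|].
  assert (Hg12 : snd (g c1) < snd (g c2)) by (apply gu; lra).
  destruct (family_point_above_base b _ Hchain Hu ltac:(simpl; lra))
    as [e [d [He [Hd Ed]]]].
  set (f := curve e) in *.
  assert (Efd : snd (f d) = snd (g c2)) by (rewrite <- Ed; reflexivity).
  assert (Hfd : fst (g c2) < fst (f d)) by (rewrite <- Ed; exact Hgt).
  pose proof (curve_cont e He) as fc. pose proof (curve_up e He) as fu.
  assert (Hstart : exists c' d', c1 <= c' < c2 /\ 0 <= d' < d /\
    snd (f d') = snd (g c') /\ fst (f d') < fst (g c')).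
  { destruct (Rle_dec (snd (f 0)) (snd (g c1))) as [Hlow|Hhigh].
    - destruct (upward_height_ivt f 0 d (snd (g c1)) fc) as [d' [Hd' Ed']]; try lra.
      exists c1, d'.
      assert (d' <> d) by (intros ->; lra).
      repeat split; try lra.
      apply Hr. rewrite <- Ed', <- surjective_pairing.
      right. exists e. split; auto. exists d'. split; [lra|reflexivity].
    - assert (Hf0 : snd (f 0) < snd (f d)) by (apply fu; lra).
      destruct (upward_height_ivt g c1 c2 (snd (f 0)) gc) as [c' [Hc' Ec']]; try lra.
      assert (c' <> c2) by (intros ->; lra).
      assert (Hr' : right b (g c')).
      { apply IH; try lra.
        - assert (Hbelow : snd (g c') <= snd (curve e 0) < snd (g c2)) by (unfold f in *; lra).
          pose proof (starts_below_lt e _ _ He Hbelow). lia.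
        - intros c Hc. apply Havoid. lra. }
      exists c', 0. repeat split; try lra.
      apply Hr'. rewrite Ec', <- surjective_pairing.
      right. exists e. split; auto. exists 0. split; [lra|reflexivity]. }
  destruct Hstart as [c' [d' [Hc' [Hd' [Eh Hleft]]]]].
  destruct (upward_curves_meet f g c' c2 d' d fc fu gc gu) as [c [d'' [Hc [Hd'' Emeet]]]];
    try lra.
  apply (Havoid c); [lra|]. rewrite Emeet. right. exists e. split; auto. exists d''. auto.
Qed.

End UpwardFamily.

(** * Reflection in the horizontal axis *)

Definition flip (q : point) : point := (fst q, - snd q).

(* [reversed f] runs through the mirror image of [f] backwards, so it is upward again. *)
Definition reversed (f : R -> point) (t : R) : point := flip (f (1 - t)).

Lemma flip_involutive q : flip (flip q) = q.
Proof. destruct q as [x y]. unfold flip. simpl. f_equal. ring. Qed.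

Lemma reversed_cont f : cont01 f -> cont01 (reversed f).
Proof.
  intros Hf t Ht eps Heps.
  assert (Hopp : forall x y, Rabs (- x - - y) = Rabs (x - y))
    by (intros; rewrite <- Rabs_Ropp; f_equal; ring).
  destruct (Hf (1 - t) ltac:(lra) eps Heps) as [delta [Hdelta Hclose]].
  exists delta. split; auto. intros t' Ht' Hd.
  destruct (Hclose (1 - t')) as [H1 H2]; [lra| |].
  - replace (1 - t' - (1 - t)) with (- t' - - t) by ring. rewrite Hopp. exact Hd.
  - unfold reversed, flip. simpl. rewrite Hopp. auto.
Qed.

Lemma reversed_upward f : upward f -> upward (reversed f).
Proof.
  intros Hf a b ? ? ?. unfold reversed, flip. simpl.
  enough (snd (f (1 - b)) < snd (f (1 - a))) by lra. apply Hf; lra.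
Qed.

Section Reversed.
Variables (E : Type) (curve : E -> R -> point) (es : list E).

Let curve' (e : E) : R -> point := reversed (curve e).

Lemma family_points_reversed b q :
  family_points curve' es (flip b) q <-> family_points curve es b (flip q).
Proof.
  split; intros [Eq|[e [He [a [Ha Eq]]]]].
  - left. rewrite Eq. apply flip_involutive.
  - right. exists e. split; auto. exists (1 - a). split; [lra|].
    rewrite Eq. apply flip_involutive.
  - left. rewrite <- Eq. symmetry. apply flip_involutive.
  - right. exists e. split; auto. exists (1 - a). split; [lra|].
    unfold curve', reversed. replace (1 - (1 - a)) with a by ring.
    rewrite <- Eq. symmetry. apply flip_involutive.
Qed.

Lemma right_of_reversed b q :
  right_of curve' es (flip b) q <-> right_of curve es b (flip q).
Proof.
  split; intros Hr u Hu; apply Hr.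
  - exact (proj2 (family_points_reversed b (u, snd q)) Hu).
  - exact (proj1 (family_points_reversed b (u, snd q)) Hu).
Qed.

Lemma chained_down_reversed b : chained_down curve es b -> chained_up curve' es (flip b).
Proof.
  intros Hchain e He. unfold curve', reversed. rewrite Rminus_0_r.
  destruct (Hchain e He) as [Eb|[e' [He' E']]]; [left; now rewrite Eb|].
  right. exists e'. split; auto. rewrite Rminus_diag. now rewrite E'.
Qed.

End Reversed.

Section TwoSided.
Variables (E : Type) (curve : E -> R -> point) (es : list E).
Hypothesis curve_cont : forall e, In e es -> cont01 (curve e).
Hypothesis curve_up : forall e, In e es -> upward (curve e).

Local Notation points := (family_points curve es).
Local Notation right := (right_of curve es).

Lemma right_of_downward_preserved b g c1 c2 :
  chained_down curve es b -> cont01 g -> upward g ->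
  0 <= c1 <= c2 -> c2 <= 1 -> snd (g c2) <= snd b -> right b (g c2) ->
  (forall c, c1 <= c <= c2 -> ~ points b (g c)) -> right b (g c1).
Proof.
  intros Hchain gc gu Hc1 Hc2 Hb Hr Havoid.
  assert (Hg : forall c, g c = flip (reversed g (1 - c))).
  { intros c. unfold reversed. replace (1 - (1 - c)) with c by ring.
    symmetry. apply flip_involutive. }
  rewrite (Hg c1). apply (proj1 (right_of_reversed _ curve es b _)).
  apply (right_of_upward_preserved _ (fun e => reversed (curve e)) es) with (c1 := 1 - c2).
  - intros e He. apply reversed_cont, curve_cont, He.
  - intros e He. apply reversed_upward, curve_up, He.
  - apply chained_down_reversed, Hchain.
  - apply reversed_cont, gc.
  - apply reversed_upward, gu.
  - lra.
  - lra.
  - unfold reversed, flip. simpl. replace (1 - (1 - c2)) with c2 by ring. lra.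
  - apply (proj2 (right_of_reversed _ curve es b _)). rewrite <- Hg. exact Hr.
  - intros c Hc Hp. apply (Havoid (1 - c)); [lra|].
    rewrite Hg. replace (1 - (1 - c)) with c by ring.
    exact (proj1 (family_points_reversed _ curve es b _) Hp).
Qed.

Lemma right_of_base_change b b' q :
  (forall p, points b p <-> points b' p) -> right b q -> right b' q.
Proof. intros Hbb' Hr u Hu. apply Hr, Hbb', Hu. Qed.

Lemma upward_curve_right_or_on b b' g a0 :
  chained_up curve es b -> chained_down curve es b' ->
  (forall p, points b p <-> points b' p) ->
  cont01 g -> upward g -> (forall a, 0 < a < 1 -> ~ points b (g a)) ->
  snd b <= snd (g 0) -> snd (g 1) <= snd b' ->
  0 <= a0 <= 1 -> right b (g a0) ->
  forall a, 0 <= a <= 1 -> points b (g a) \/ right b (g a).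
Proof.
  intros Hup Hdown Hbb' gc gu Hinterior Hb Hb' Ha0 Hr a Ha.
  destruct (classic (points b (g a))) as [Hon|Hoff]; [left; exact Hon|right].
  assert (Havoid : forall c, Rmin a0 a <= c <= Rmax a0 a -> ~ points b (g c)).
  { intros c Hc. unfold Rmin, Rmax in Hc.
    destruct (Req_dec c a0) as [->|N0]; [apply right_of_not_point, Hr|].
    destruct (Req_dec c a) as [->|N1]; [exact Hoff|].
    apply Hinterior. destruct (Rle_dec a0 a); lra. }
  unfold Rmin, Rmax in Havoid. destruct (Rle_dec a0 a) as [Hle|Hgt].
  - apply (right_of_upward_preserved _ curve es curve_cont curve_up b g a0);
      auto; try lra.
    pose proof (upward_le g 0 a0 gu). lra.
  - apply (right_of_base_change b'); [intros p; symmetry; apply Hbb'|].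
    apply (right_of_downward_preserved b' g a a0); auto; try lra.
    + pose proof (upward_le g a0 1 gu). lra.
    + apply (right_of_base_change b); auto.
    + intros c Hc Hp. apply (Havoid c Hc), Hbb', Hp.
Qed.
End TwoSided.

Section Walks.
Variable G : digraph.

Lemma walk_app (x y z : vert G) A B :
  is_walk x A y -> is_walk y B z -> is_walk x (A ++ B) z.
Proof.
  revert x. induction A as [|e A IH]; simpl; intros x H1 H2; [subst; auto|].
  destruct H1; split; eauto.
Qed.

Lemma walk_app_inv (x z : vert G) A B :
  is_walk x (A ++ B) z -> exists y, is_walk x A y /\ is_walk y B z.
Proof.
  revert x. induction A as [|e A IH]; simpl; intros x H; [exists x; auto|].
  destruct H as [H1 H2]. destruct (IH _ H2) as [y [Hy1 Hy2]]. exists y; split; auto.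
Qed.

Lemma walk_verts_app (x : vert G) A B :
  walk_verts x (A ++ B) = walk_verts x A ++ map (@head G) B.
Proof. unfold walk_verts. rewrite map_app. reflexivity. Qed.

Lemma walk_split_at (x z v : vert G) es : is_walk x es z -> In v (walk_verts x es) ->
  exists L1 L2, es = L1 ++ L2 /\ is_walk x L1 v /\ is_walk v L2 z.
Proof.
  revert x. induction es as [|e es IH]; intros x HW Hin; simpl in *.
  - destruct Hin as [<-|[]]. exists [], []. simpl; auto.
  - destruct HW as [Ht HW]. destruct Hin as [<-|Hin].
    + exists [], (e :: es). simpl; auto.
    + destruct (IH (head e) HW Hin) as [L1 [L2 [E [H1 H2]]]].
      exists (e :: L1), L2. subst. simpl; auto.
Qed.

Lemma walk_edge_ends_in_verts (x y : vert G) es e : is_walk x es y -> In e es ->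
  In (tail e) (walk_verts x es) /\ In (head e) (walk_verts x es).
Proof.
  revert x. induction es as [|e' es IH]; simpl; intros x HW Hin; [destruct Hin|].
  destruct HW as [Ht HW]. destruct Hin as [<-|Hin].
  - split; auto.
  - destruct (IH _ HW Hin) as [H1 H2]. unfold walk_verts in *. simpl in *. tauto.
Qed.

Lemma walk_end_in_verts (x y : vert G) es : is_walk x es y -> In y (walk_verts x es).
Proof.
  revert x. induction es as [|e es IH]; simpl; intros x HW; [subst; auto|].
  destruct HW as [_ HW]. specialize (IH _ HW). unfold walk_verts in *. simpl in *. tauto.
Qed.

Section Bridges.
Variable V : vert G -> Prop.

Lemma walk_split_first (x y : vert G) es : is_walk x es y -> V y ->
  exists S B w, es = S ++ B /\ is_walk x S w /\ is_walk w B y /\ V w /\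
    forall e, In e S -> ~ V (tail e).
Proof.
  revert x. induction es as [|e es IH]; intros x HW Hy.
  - simpl in HW. subst x. exists [], [], y. simpl. repeat split; auto.
  - destruct (classic (V x)) as [Hx|Hx].
    + exists [], (e :: es), x. simpl. repeat split; auto; apply HW.
    + destruct HW as [Ht HW]. destruct (IH _ HW Hy) as [S [B [w [E [H1 [H2 [H3 H4]]]]]]].
      exists (e :: S), B, w. subst. simpl. repeat split; auto.
      intros e' [<-|Hin]; auto.
Qed.

Lemma walk_split_last (x y : vert G) es : is_walk x es y -> V x ->
  exists A S u, es = A ++ S /\ is_walk x A u /\ is_walk u S y /\ V u /\
    forall e, In e S -> ~ V (head e).
Proof.
  revert y. induction es as [|e es IH] using rev_ind; intros y HW Hx.
  - simpl in HW. subst y. exists [], [], x. simpl. repeat split; auto.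
  - destruct (walk_app_inv _ _ _ _ HW) as [z [Hes [Ht Hh]]]. simpl in Hh. subst y.
    destruct (classic (V (head e))) as [Hy|Hy].
    + exists (es ++ [e]), [], (head e). rewrite app_nil_r. simpl. repeat split; auto.
    + destruct (IH _ Hes Hx) as [A [S [u [E [H1 [H2 [H3 H4]]]]]]].
      exists A, (S ++ [e]), u. subst. rewrite app_assoc. repeat split; auto.
      * eapply walk_app; simpl; eauto.
      * intros e' He'. apply in_app_or in He'. destruct He' as [He'|[<-|[]]]; auto.
Qed.

Lemma walk_heads_off (y w : vert G) es : is_walk y es w ->
  (forall e, In e es -> ~ V (tail e)) ->
  (y = w \/ ~ V y) /\ forall e, In e es -> head e = w \/ ~ V (head e).
Proof.
  revert y. induction es as [|e es IH]; intros y HW Hoff; simpl in HW.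
  - split; [left; exact HW|intros ? []].
  - destruct HW as [Ht HW].
    destruct (IH (head e) HW) as [Hh Hes]; [intros; apply Hoff; right; auto|].
    split; [right; rewrite <- Ht; apply Hoff; left; auto|].
    intros e' [<-|He']; auto.
Qed.

(* The maximal subwalk through [e0] whose inner vertices avoid [V]. *)
Lemma walk_bridge_decomposition (x y : vert G) es e0 :
  is_walk x es y -> V x -> V y -> In e0 es ->
  exists A S1 S2 B u w, es = A ++ S1 ++ e0 :: S2 ++ B /\
    is_walk x A u /\ is_walk u S1 (tail e0) /\ is_walk (head e0) S2 w /\ is_walk w B y /\
    V u /\ V w /\ (forall e, In e S1 -> ~ V (head e)) /\ (forall e, In e S2 -> ~ V (tail e)) /\
    (forall e, In e (S1 ++ e0 :: S2) -> head e = w \/ ~ V (head e)).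
Proof.
  intros HW Hx Hy He0. destruct (in_split _ _ He0) as [L [R E]]. subst es.
  destruct (walk_app_inv _ _ _ _ HW) as [z [HL [Hz HR]]].
  destruct (walk_split_last _ _ _ HL Hx) as [A [S1 [u [EL [HA [HS1 [Hu HS1h]]]]]]].
  destruct (walk_split_first _ _ _ HR Hy) as [S2 [B [w [ER [HS2 [HB [Hw HS2t]]]]]]].
  exists A, S1, S2, B, u, w. subst L R z. rewrite <- app_assoc.
  destruct (walk_heads_off _ _ _ HS2 HS2t) as [Hh0 HS2h].
  repeat split; auto.
  intros e He. apply in_app_or in He. destruct He as [He|[<-|He]]; auto.
Qed.

End Bridges.
End Walks.

(** * Paths in an upward planar drawing *)

Section Drawing.
Variables (G : digraph) (D : upward_planar_drawing G).

Lemma edge_upward e : upward (ecurve D e).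
Proof. exact (ecurve_upward D e). Qed.

Lemma edge_point_height e a : 0 <= a <= 1 ->
  snd (vpos D (tail e)) <= snd (ecurve D e a) <= snd (vpos D (head e)).
Proof.
  intros. rewrite <- ecurve_tail, <- ecurve_head.
  split; apply upward_le; auto using edge_upward; lra.
Qed.

Lemma tail_below_head e : snd (vpos D (tail e)) < snd (vpos D (head e)).
Proof. rewrite <- ecurve_tail, <- ecurve_head. apply edge_upward; lra. Qed.

Lemma walk_edge_heights (x y : vert G) es : is_walk x es y ->
  snd (vpos D x) <= snd (vpos D y) /\
  forall e, In e es ->
    snd (vpos D x) <= snd (vpos D (tail e)) /\ snd (vpos D (head e)) <= snd (vpos D y).
Proof.
  revert x. induction es as [|e es IH]; simpl; intros x HW.
  - subst. split; [lra|tauto].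
  - destruct HW as [<- HW]. destruct (IH _ HW) as [H1 H2]. pose proof (tail_below_head e).
    split; [lra|]. intros e' [<-|Hin]; [lra|]. specialize (H2 e' Hin). lra.
Qed.

Lemma walk_vert_height (x y v : vert G) es : is_walk x es y -> In v (walk_verts x es) ->
  snd (vpos D x) <= snd (vpos D v) <= snd (vpos D y).
Proof.
  intros HW Hin. destruct (walk_edge_heights x y es HW) as [H0 H].
  destruct Hin as [<-|Hin]; [lra|]. apply in_map_iff in Hin. destruct Hin as [e [<- He]].
  specialize (H e He). pose proof (tail_below_head e). lra.
Qed.

Lemma walk_head_above_start (x y : vert G) es e : is_walk x es y -> In e es ->
  snd (vpos D x) < snd (vpos D (head e)).
Proof.
  intros HW He. destruct (walk_edge_heights x y es HW) as [_ H].
  specialize (H e He). pose proof (tail_below_head e). lra.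
Qed.

Section OnePath.
Variables (s t : vert G) (P : list (edge G)).
Hypothesis HP : is_walk s P t.

Local Notation on_P v := (In v (walk_verts s P)).
Local Notation right := (right_of (ecurve D) P (vpos D s)).

Lemma walk_chained_up : chained_up (ecurve D) P (vpos D s).
Proof.
  revert s HP. induction P as [|e0 P' IH]; intros x HW e He; [destruct He|].
  destruct HW as [Ht HW]. destruct He as [<-|He].
  - left. rewrite ecurve_tail, Ht. reflexivity.
  - right. destruct (IH _ HW e He) as [E|[e' [He' E]]].
    + exists e0. split; [left; auto|]. rewrite E, ecurve_head. reflexivity.
    + exists e'. split; [right|]; auto.
Qed.

Lemma walk_chained_down : chained_down (ecurve D) P (vpos D t).
Proof.
  revert s HP. induction P as [|e0 P' IH]; intros x HW e He; [destruct He|].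
  destruct HW as [Ht HW]. destruct He as [<-|He].
  - destruct P' as [|e1 P'']; simpl in HW.
    + left. rewrite ecurve_head, HW. reflexivity.
    + right. exists e1. split; [right; left; auto|]. destruct HW as [Ht1 _].
      rewrite ecurve_tail, ecurve_head, Ht1. reflexivity.
  - destruct (IH _ HW e He) as [E|[e' [He' E]]]; [left; exact E|].
    right. exists e'. split; [right|]; auto.
Qed.

Lemma path_points_vert v : path_points D s P (vpos D v) <-> on_P v.
Proof.
  split.
  - intros [H|[e [He [a [Ha H]]]]].
    + apply vpos_inj in H. subst. left. auto.
    + pose proof (walk_edge_ends_in_verts G s t P e HP He) as [Htail Hhead].
      destruct (Req_dec a 0) as [->|N0]; [rewrite ecurve_tail in H|].
      { apply vpos_inj in H. subst. exact Htail. }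
      destruct (Req_dec a 1) as [->|N1]; [rewrite ecurve_head in H|].
      { apply vpos_inj in H. subst. exact Hhead. }
      exfalso. apply (ecurve_avoid_vertices D e v (t := a)); auto. lra.
  - intros [<-|Hin]; [left; auto|]. apply in_map_iff in Hin. destruct Hin as [e [<- He]].
    right. exists e. split; auto. exists 1. split; [lra|]. rewrite ecurve_head. auto.
Qed.

Lemma path_points_base_end q :
  path_points D s P q <-> family_points (ecurve D) P (vpos D t) q.
Proof.
  assert (Ht : path_points D s P (vpos D t))
    by apply path_points_vert, (walk_end_in_verts G s t P HP).
  assert (Hs : family_points (ecurve D) P (vpos D t) (vpos D s)).
  { destruct P as [|e P']; [left; simpl in HP; subst; reflexivity|].
    right. exists e. split; [left; auto|]. exists 0. split; [lra|].
    rewrite ecurve_tail. destruct HP as [-> _]. reflexivity. }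
  split; intros [->|Hq]; auto; right; exact Hq.
Qed.

Lemma edge_interior_off_path e a : ~ In e P -> 0 < a < 1 -> ~ path_points D s P (ecurve D e a).
Proof.
  intros HnP Ha [H|[e' [He' [b [Hb H]]]]].
  - apply (ecurve_avoid_vertices D e s Ha); auto.
  - assert (e <> e') by (intro; subst; auto).
    destruct (@ecurve_noncrossing G D e e' a b) as [v Hv]; auto; try lra.
    apply (ecurve_avoid_vertices D e v Ha); auto.
Qed.

Definition in_band (e : edge G) : Prop :=
  snd (vpos D s) <= snd (vpos D (tail e)) /\ snd (vpos D (head e)) <= snd (vpos D t).

Definition hits_right (e : edge G) : Prop := exists a, 0 <= a <= 1 /\ right (ecurve D e a).

Lemma walk_in_band es e : is_walk s es t -> In e es -> in_band e.
Proof. intros HW He. apply (walk_edge_heights s t es HW), He. Qed.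

Lemma in_band_right_RightOf e a : in_band e -> 0 <= a <= 1 -> right (ecurve D e a) ->
  RightOf D s t P (ecurve D e a).
Proof.
  intros [Hlo Hhi] Ha Hr. split; [|exact Hr].
  pose proof (edge_point_height e a Ha).
  unfold Rmin, Rmax. destruct (Rle_dec (snd (vpos D s)) (snd (vpos D t))); lra.
Qed.

Lemma hits_right_not_on_path e : hits_right e -> ~ In e P.
Proof.
  intros [a [Ha Hr]] He. apply (right_of_not_point _ _ _ _ Hr).
  right. exists e. split; auto. exists a. auto.
Qed.

Lemma hits_right_edge_points e : in_band e -> hits_right e ->
  forall a, 0 <= a <= 1 -> path_points D s P (ecurve D e a) \/ right (ecurve D e a).
Proof.
  intros [Hlo Hhi] [a0 [Ha0 Hr]].
  apply (upward_curve_right_or_on _ (ecurve D) P) with (b' := vpos D t) (a0 := a0); auto.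
  - intros e' _. apply ecurve_cont.
  - intros e' _. apply edge_upward.
  - apply walk_chained_up.
  - apply walk_chained_down.
  - apply path_points_base_end.
  - apply ecurve_cont.
  - apply edge_upward.
  - intros a Ha. apply edge_interior_off_path; auto.
    apply hits_right_not_on_path. exists a0. auto.
  - rewrite ecurve_tail. exact Hlo.
  - rewrite ecurve_head. exact Hhi.
Qed.

Lemma hits_right_through_vertex e e' v a a' :
  in_band e -> hits_right e -> ~ on_P v -> 0 <= a <= 1 -> 0 <= a' <= 1 ->
  ecurve D e a = vpos D v -> ecurve D e' a' = vpos D v -> hits_right e'.
Proof.
  intros Hband Hr Hv Ha Ha' Ee Ee'. exists a'. split; auto. rewrite Ee'.
  destruct (hits_right_edge_points e Hband Hr a Ha) as [Hon|Hright]; rewrite Ee in *.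
  - exfalso. apply Hv, path_points_vert, Hon.
  - exact Hright.
Qed.

Lemma hits_right_forward (y w : vert G) es e0 : is_walk y es w ->
  (forall e, In e es -> ~ on_P (tail e)) -> (forall e, In e es -> in_band e) ->
  in_band e0 -> head e0 = y -> hits_right e0 -> forall e, In e es -> hits_right e.
Proof.
  revert y e0. induction es as [|e1 es IH]; intros y e0 HW Hoff Hband Hb0 Hy Hr0 e He;
    [destruct He|].
  destruct HW as [Ht HW].
  assert (Hr1 : hits_right e1).
  { apply (hits_right_through_vertex e0 e1 y 1 0); auto; try lra.
    - rewrite <- Ht. apply Hoff. left; auto.
    - rewrite ecurve_head, Hy. reflexivity.
    - rewrite ecurve_tail, Ht. reflexivity. }
  destruct He as [<-|He]; [exact Hr1|].
  apply (IH (head e1) e1); auto.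
  - intros e' He'. apply Hoff. right. exact He'.
  - intros e' He'. apply Hband. right. exact He'.
  - apply Hband. left. reflexivity.
Qed.

Lemma hits_right_backward (y x : vert G) es e0 : is_walk y es x ->
  (forall e, In e es -> ~ on_P (head e)) -> (forall e, In e es -> in_band e) ->
  in_band e0 -> tail e0 = x -> hits_right e0 -> forall e, In e es -> hits_right e.
Proof.
  revert y. induction es as [|e1 es IH]; intros y HW Hoff Hband Hb0 Hx Hr0 e He;
    [destruct He|].
  destruct HW as [_ HW].
  assert (IH' : forall e, In e es -> hits_right e)
    by (apply (IH (head e1)); auto; intros e' He'; [apply Hoff|apply Hband]; right; exact He').
  destruct He as [<-|He]; [|apply IH', He].
  assert (Hnext : exists e2 a2, in_band e2 /\ hits_right e2 /\ 0 <= a2 <= 1 /\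
    ecurve D e2 a2 = vpos D (head e1)).
  { destruct es as [|e2 es']; simpl in HW.
    - exists e0, 0. split; auto. split; auto. split; [lra|].
      rewrite ecurve_tail, Hx, HW. reflexivity.
    - exists e2, 0. destruct HW as [Ht2 _]. split; [apply Hband; right; left; auto|].
      split; [apply IH'; left; auto|]. split; [lra|]. rewrite ecurve_tail, Ht2. reflexivity. }
  destruct Hnext as [e2 [a2 [Hb2 [Hr2 [Ha2 E2]]]]].
  apply (hits_right_through_vertex e2 e1 (head e1) a2 1); auto; try lra.
  - apply Hoff. left; auto.
  - apply ecurve_head.
Qed.

Definition bridge (u w : vert G) (S : list (edge G)) : Prop :=
  on_P u /\ on_P w /\ snd (vpos D u) < snd (vpos D w) /\ is_walk u S w /\
  NoDup (map (@head G) S) /\ forall e, In e S -> head e = w \/ ~ on_P (head e).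

Lemma right_bridge_exists P' e0 : is_walk s P' t -> NoDup (walk_verts s P') ->
  In e0 P' -> hits_right e0 ->
  exists u w S, bridge u w S /\ In e0 S /\ forall e, In e S -> in_band e /\ hits_right e.
Proof.
  intros HP' Hnodup He0 Hr0.
  destruct (walk_bridge_decomposition G (fun v => on_P v) s t P' e0 HP'
    (or_introl eq_refl) (walk_end_in_verts G s t P HP) He0)
    as [A [S1 [S2 [B [u [w [EP' [_ [HS1 [HS2 [_ [Hu [Hw [HS1off [HS2off HSheads]]]]]]]]]]]]]]].
  set (S := S1 ++ e0 :: S2) in HSheads.
  assert (EPS : P' = A ++ S ++ B) by (rewrite EP'; unfold S; rewrite <- app_assoc; reflexivity).
  assert (Hband : forall e, In e S -> in_band e)
    by (intros e He; apply (walk_in_band P'); [exact HP'|rewrite EPS, !in_app_iff; tauto]).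
  assert (HS : is_walk u S w) by (apply (walk_app G u (tail e0)); simpl; auto).
  assert (He0S : In e0 S) by (unfold S; rewrite in_app_iff; simpl; auto).
  exists u, w, S. split; [repeat split|split; [exact He0S|]]; auto.
  - pose proof (walk_head_above_start u w S e0 HS He0S).
    pose proof (proj2 (walk_edge_heights u w S HS) e0 He0S). lra.
  - rewrite EPS, !walk_verts_app, map_app in Hnodup.
    apply NoDup_app_remove_l, NoDup_app_remove_r in Hnodup. exact Hnodup.
  - intros e He. split; [apply Hband, He|].
    unfold S in He. apply in_app_or in He. destruct He as [He|[<-|He]].
    + apply (hits_right_backward u (tail e0) S1 e0); auto;
        intros; apply Hband; unfold S; rewrite in_app_iff; simpl; auto.
    + exact Hr0.
    + apply (hits_right_forward (head e0) w S2 e0); auto;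
        intros; apply Hband; unfold S; rewrite in_app_iff; simpl; auto.
Qed.

(* Follow [P] up to [u], then [S] up to [w], then [P] again.  The three vertex
   lists are disjoint: those of [P] before [u] lie below [u], those after [w]
   lie above [w], and the inner vertices of [S] avoid [P]. *)
Lemma reroute_dipath (u w : vert G) S : NoDup (walk_verts s P) -> bridge u w S ->
  exists Pa Pb, dipath s t (Pa ++ S ++ Pb) /\ incl Pa P /\ incl Pb P.
Proof.
  intros Hnodup [Hu [Hw [Huw [HS [HSnodup HSheads]]]]].
  destruct (walk_split_at G s t w P HP Hw) as [Pw [Pb [EP [HPw HPb]]]].
  assert (Hu' : In u (walk_verts s Pw)).
  { rewrite EP, walk_verts_app in Hu. apply in_app_or in Hu. destruct Hu as [Hu|Hu]; auto.
    apply in_map_iff in Hu. destruct Hu as [e [<- He]].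
    pose proof (walk_head_above_start w t Pb e HPb He). lra. }
  destruct (walk_split_at G s w u Pw HPw Hu') as [Pa [Pm [EPw [HPa HPm]]]].
  assert (EP3 : walk_verts s P = walk_verts s Pa ++ map (@head G) Pm ++ map (@head G) Pb)
    by (rewrite EP, EPw, !walk_verts_app, <- app_assoc; reflexivity).
  rewrite EP3 in Hnodup.
  assert (HPa_v : forall v, In v (walk_verts s Pa) ->
    on_P v /\ snd (vpos D v) <= snd (vpos D u)).
  { intros v Hv. split; [rewrite EP3; apply in_or_app; left; exact Hv|].
    apply (walk_vert_height s u v Pa HPa Hv). }
  assert (HPb_v : forall v, In v (map (@head G) Pb) ->
    on_P v /\ snd (vpos D w) < snd (vpos D v)).
  { intros v Hv. split; [rewrite EP3, !in_app_iff; tauto|].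
    apply in_map_iff in Hv. destruct Hv as [e [<- He]].
    apply (walk_head_above_start w t Pb e HPb He). }
  assert (HS_v : forall v, In v (map (@head G) S) -> v = w \/ ~ on_P v).
  { intros v Hv. apply in_map_iff in Hv. destruct Hv as [e [<- He]]. apply HSheads, He. }
  exists Pa, Pb. split; [split|split].
  - apply (walk_app G s u t); auto. apply (walk_app G u w t); auto.
  - rewrite walk_verts_app, map_app. apply NoDup_app; [|apply NoDup_app|].
    + apply NoDup_app_remove_r in Hnodup. exact Hnodup.
    + exact HSnodup.
    + do 2 apply NoDup_app_remove_l in Hnodup. exact Hnodup.
    + intros v HvS HvPb. destruct (HPb_v v HvPb).
      destruct (HS_v v HvS) as [->|]; [lra|auto].
    + intros v HvPa HvSPb. destruct (HPa_v v HvPa).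
      apply in_app_or in HvSPb. destruct HvSPb as [HvS|HvPb].
      * destruct (HS_v v HvS) as [->|]; [lra|auto].
      * destruct (HPb_v v HvPb). lra.
  - intros e He. rewrite EP, EPw, !in_app_iff. tauto.
  - intros e He. rewrite EP. apply in_or_app. right. exact He.
Qed.

Lemma rerouted_points Pa S Pb q : incl Pa P -> incl Pb P ->
  (forall e, In e S -> in_band e /\ hits_right e) ->
  path_points D s (Pa ++ S ++ Pb) q -> path_points D s P q \/ RightOf D s t P q.
Proof.
  intros HPa HPb HS [->|[e [He [a [Ha ->]]]]]; [left; left; reflexivity|].
  rewrite !in_app_iff in He. destruct He as [He|[He|He]].
  - left. right. exists e. split; [apply HPa, He|]. exists a. auto.
  - destruct (HS e He) as [Hband Hr].
    destruct (hits_right_edge_points e Hband Hr a Ha) as [Hon|Hright]; [left; exact Hon|].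
    right. apply in_band_right_RightOf; auto.
  - left. right. exists e. split; [apply HPb, He|]. exists a. auto.
Qed.

End OnePath.
End Drawing.

Theorem lemma9 (G : digraph) (D : upward_planar_drawing G) (s t : vert G)
  (P P' : list (edge G)) :
  dipath s t P -> dipath s t P' ->
  (exists p, path_points D s P' p /\ RightOf D s t P p) ->
  exists Q, dipath s t Q /\
    (forall p, path_points D s Q p -> path_points D s P p \/ RightOf D s t P p) /\
    (exists p, path_points D s Q p /\ RightOf D s t P p).
Proof.
  intros [HP HPnodup] [HP' HP'nodup] [p [Hp [_ Hright]]].
  destruct Hp as [Ep|[e0 [He0 [a0 [Ha0 ->]]]]].
  { exfalso. apply (right_of_not_point _ _ _ _ Hright). left. exact Ep. }
  destruct (right_bridge_exists G D s t P HP P' e0 HP' HP'nodup He0)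
    as [u [w [S [Hbridge [He0S HS]]]]]; [exists a0; auto|].
  destruct (reroute_dipath G D s t P HP u w S HPnodup Hbridge) as [Pa [Pb [HQ [HPa HPb]]]].
  exists (Pa ++ S ++ Pb). split; [exact HQ|split].
  - intros q. apply (rerouted_points G D s t P HP Pa S Pb q HPa HPb HS).
  - exists (ecurve D e0 a0). split.
    + right. exists e0. split; [rewrite !in_app_iff; auto|]. exists a0. auto.
    + apply in_band_right_RightOf; auto. apply (walk_in_band G D s t P' e0 HP' He0).
Qed.
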